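(* Let $a\in C[0,1]$ satisfy: the open sets $\Omega_-:=a^{-1}((-\infty,0))$ and $\Omega_+:=a^{-1}((0,\infty))$ consist of finitely many nontrivial open intervals, $\Omega_-=\bigcup_{j=1}^r(\alpha_j,\beta_j)$ and $\Omega_+=\bigcup_{i=1}^s(\gamma_i,\varrho_i)$, $a$ vanishes at the endpoints of these intervals, and they are adjacent and interlacing (each interior interval is surrounded by two intervals of the opposite sign). For $j\in\{1,\dots,r\}$ and $\lambda\in\mathbb R$, let $\ell^{\min}_{\lambda,j}$ denote the minimal positive solution of $-u''=\lambda u+a(x)u^2$ in $(\alpha_j,\beta_j)$ subject to: $u(\alpha_j)=u(\beta_j)=\infty$ if $0<\alpha_j<\beta_j<1$; $u(0)=0$, $u(\beta_j)=\infty$ if $0=\alpha_j<\beta_j<1$; $u(\alpha_j)=\infty$, $u(1)=0$ if $0<\alpha_j<\beta_j=1$. Then for every $j\in\{1,\dots,r\}$ and every $x\in(\alpha_j,\beta_j)$, $$\lim_{\lambda\downarrow-\infty}\ell^{\min}_{\lambda,j}(x)=0,$$ uniformly on compact subsets of $(\alpha_j,\beta_j)$.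
   Context: A boundary condition $u=\infty$ at an endpoint $c$ means $u(x)\to+\infty$ as $x\to c$ from inside the interval (large/blow-up solutions). The minimal positive solution is the pointwise smallest positive solution of the corresponding singular boundary value problem; its existence is known. *)

From Stdlib Require Import Reals Lra.
From Coquelicot Require Import Coquelicot.
Open Scope R_scope.

Definition left_bc (u : R -> R) (c : R) : Prop :=
  if Req_EM_T c 0 then filterlim u (at_right c) (locally 0)
  else filterlim u (at_right c) (Rbar_locally p_infty).

Definition right_bc (u : R -> R) (d : R) : Prop :=
  if Req_EM_T d 1 then filterlim u (at_left d) (locally 0)
  else filterlim u (at_left d) (Rbar_locally p_infty).

Definition pos_solution (a : R -> R) (lam al be : R) (u : R -> R) : Prop :=
  (forall x, al < x < be ->
     0 < u x /\ ex_derive u x /\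
     is_derive (Derive u) x (- (lam * u x + a x * (u x) ^ 2))) /\
  left_bc u al /\ right_bc u be.

Definition minimal_pos_solution (a : R -> R) (lam al be : R) (u : R -> R) : Prop :=
  pos_solution a lam al be u /\
  forall v, pos_solution a lam al be v -> forall x, al < x < be -> u x <= v x.

From Stdlib Require Import Reals Lra Lia.
From Coquelicot Require Import Coquelicot.
Open Scope R_scope.

(* With mu = -lam and g = -a >= kap > 0 near a compact [c, d], every positive
   solution satisfies u'' = mu u + g u^2.  Comparison with the Keller-Osserman
   barrier A/(x-p)^2 + A/(q-x)^2, A = 6/kap, bounds u on [c, d] independently
   of lam; comparison with M (exp(-r (x-p)) + exp(-r (q-x))), r = sqrt mu, then
   makes u exponentially small in r. *)

Lemma deriv_pos_right_of_critical (f1 : R -> R) (m f2 : R) :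
  f1 m = 0 -> is_derive f1 m f2 -> 0 < f2 ->
  exists del, 0 < del /\ forall x, m < x < m + del -> 0 < f1 x.
Proof.
  intros Hm Hd Hf2.
  apply is_derive_Reals in Hd.
  destruct (Hd f2 Hf2) as [del Hdel].
  exists del; split; [apply cond_pos|].
  intros x Hx.
  assert (Habs : Rabs (x - m) < del) by (rewrite Rabs_right; lra).
  specialize (Hdel (x - m) ltac:(lra) Habs).
  replace (m + (x - m)) with x in Hdel by ring.
  rewrite Hm, Rminus_0_r in Hdel.
  apply Rabs_def2 in Hdel as [_ Hlow].
  assert (Hquot : 0 < f1 x / (x - m)) by lra.
  replace (f1 x) with (f1 x / (x - m) * (x - m)) by (field; lra).
  apply Rmult_lt_0_compat; lra.
Qed.

Lemma maximum_principle (f f1 : R -> R) (p q : R) :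
  p <= q ->
  (forall x, p <= x <= q -> is_derive f x (f1 x)) ->
  (forall x, p < x < q -> 0 < f x -> exists f2, is_derive f1 x f2 /\ 0 < f2) ->
  f p <= 0 -> f q <= 0 -> forall x, p <= x <= q -> f x <= 0.
Proof.
  intros Hpq Hd Hd2 Hp Hq x Hx.
  destruct (Rle_or_lt (f x) 0) as [Hle|Hpos]; [exact Hle|exfalso].
  destruct (continuity_ab_maj f p q Hpq) as [m [Hmax Hm]].
  { intros c Hc. apply continuity_pt_filterlim.
    apply (ex_derive_continuous (K := R_AbsRing) (V := R_NormedModule)).
    eexists; apply Hd, Hc. }
  assert (Hfm : 0 < f m) by (specialize (Hmax x Hx); lra).
  assert (Hmi : p < m < q) by (destruct Hm as [[|] [|]]; subst; lra).
  assert (Hcrit : f1 m = 0).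
  { assert (Hlim : derivable_pt_lim f m (f1 m)) by (apply is_derive_Reals, Hd; lra).
    rewrite <- (derive_pt_eq_0 f m (f1 m) (exist _ (f1 m) Hlim) Hlim).
    apply deriv_maximum with p q; try lra.
    intros; apply Hmax; lra. }
  destruct (Hd2 m Hmi Hfm) as [f2 [Hf2 Hf2pos]].
  destruct (deriv_pos_right_of_critical f1 m f2 Hcrit Hf2 Hf2pos) as [del [Hdel Hinc]].
  set (x1 := m + Rmin del (q - m) / 2).
  assert (Hx1 : m < x1 < m + del /\ x1 <= q).
  { pose proof (Rmin_l del (q - m)); pose proof (Rmin_r del (q - m)).
    assert (0 < Rmin del (q - m)) by (apply Rmin_glb_lt; lra).
    unfold x1; lra. }
  destruct (MVT_cor2 f f1 m x1) as [c [Hmvt Hc]]; [lra| |].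
  { intros c Hc. apply is_derive_Reals, Hd; lra. }
  assert (0 < f1 c) by (apply Hinc; lra).
  assert (f x1 <= f m) by (apply Hmax; lra).
  nra.
Qed.

Lemma comparison_principle (u u1 u2 w w1 w2 : R -> R) (p q : R) :
  p <= q ->
  (forall x, p <= x <= q -> is_derive u x (u1 x) /\ is_derive w x (w1 x)) ->
  (forall x, p < x < q -> is_derive u1 x (u2 x) /\ is_derive w1 x (w2 x)) ->
  (forall x, p < x < q -> w x < u x -> w2 x < u2 x) ->
  u p <= w p -> u q <= w q -> forall x, p <= x <= q -> u x <= w x.
Proof.
  intros Hpq Hd Hd2 Hcmp Hp Hq x Hx.
  enough (u x - w x <= 0) by lra.
  apply (maximum_principle (fun y => u y - w y) (fun y => u1 y - w1 y) p q);
    [exact Hpq | | | lra | lra | exact Hx].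
  - intros y Hy. destruct (Hd y Hy) as [Hu Hw].
    exact (is_derive_minus u w y _ _ Hu Hw).
  - intros y Hy Hpos. destruct (Hd2 y Hy) as [Hu1 Hw1].
    exists (u2 y - w2 y). split.
    + exact (is_derive_minus u1 w1 y _ _ Hu1 Hw1).
    + specialize (Hcmp y Hy); lra.
Qed.

Definition solves_on (mu : R) (g u : R -> R) (p q : R) : Prop :=
  forall x, p <= x <= q -> ex_derive u x /\ is_derive (Derive u) x (mu * u x + g x * u x ^ 2).

Lemma continuous_of_solves_on (mu : R) (g u : R -> R) (p q : R) :
  solves_on mu g u p q -> forall x, p <= x <= q -> continuity_pt u x.
Proof.
  intros Hu x Hx. apply continuity_pt_filterlim.
  apply (ex_derive_continuous (K := R_AbsRing) (V := R_NormedModule)), Hu, Hx.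
Qed.

Lemma is_derive_ko_barrier (A p q e x : R) : p <= x <= q -> 0 < e ->
  is_derive (fun y => A / (y - p + e) ^ 2 + A / (q - y + e) ^ 2) x
    (- 2 * A / (x - p + e) ^ 3 + 2 * A / (q - x + e) ^ 3) /\
  is_derive (fun y => - 2 * A / (y - p + e) ^ 3 + 2 * A / (q - y + e) ^ 3) x
    (6 * A / (x - p + e) ^ 4 + 6 * A / (q - x + e) ^ 4).
Proof.
  intros Hx He.
  assert (0 < x - p + e) by lra. assert (0 < q - x + e) by lra.
  split; (auto_derive;
    [ repeat split; apply Rgt_not_eq; repeat apply Rmult_lt_0_compat; lra
    | field; lra ]).
Qed.

(* With s = (y-p+e)^-2 and t = (q-y+e)^-2 the barrier is A s + A t and its second
   derivative is 6 A (s^2 + t^2); this is where A = 6/kap comes from. *)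
Lemma ko_barrier_supersolution (kap A s t : R) :
  kap * A = 6 -> 0 < A -> 0 <= s -> 0 <= t ->
  6 * A * s ^ 2 + 6 * A * t ^ 2 <= kap * (A * s + A * t) ^ 2.
Proof.
  intros HkA HA Hs Ht.
  replace (kap * (A * s + A * t) ^ 2) with (kap * A * A * (s + t) ^ 2) by ring.
  rewrite HkA.
  assert (0 <= A * (s * t)) by (apply Rmult_le_pos; [lra | apply Rmult_le_pos; lra]).
  nra.
Qed.

Lemma le_ko_barrier (mu kap e : R) (g u : R -> R) (p q : R) :
  0 <= mu -> 0 < kap -> p < q -> 0 < e -> solves_on mu g u p q ->
  (forall x, p <= x <= q -> kap <= g x) ->
  u p <= 6 / kap / e ^ 2 -> u q <= 6 / kap / e ^ 2 ->
  forall x, p <= x <= q -> u x <= 6 / kap / (x - p + e) ^ 2 + 6 / kap / (q - x + e) ^ 2.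
Proof.
  intros Hmu Hkap Hpq He Hu Hg Hup Huq.
  set (A := 6 / kap).
  assert (HA : 0 < A) by (unfold A; apply Rdiv_lt_0_compat; lra).
  assert (HkA : kap * A = 6) by (unfold A; field; lra).
  assert (Hfar : 0 < A / (q - p + e) ^ 2)
    by (apply Rdiv_lt_0_compat; [lra | apply pow_lt; lra]).
  apply (comparison_principle u (Derive u) (fun y => mu * u y + g y * u y ^ 2)
    _ (fun y => - 2 * A / (y - p + e) ^ 3 + 2 * A / (q - y + e) ^ 3)
      (fun y => 6 * A / (y - p + e) ^ 4 + 6 * A / (q - y + e) ^ 4) p q).
  - lra.
  - intros y Hy. split; [apply Derive_correct, Hu, Hy | apply is_derive_ko_barrier; lra].
  - intros y Hy. split; [apply Hu; lra | apply is_derive_ko_barrier; lra].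
  - intros y Hy Hwu.
    set (s := / (y - p + e) ^ 2). set (t := / (q - y + e) ^ 2).
    assert (Hs : 0 < s) by (apply Rinv_0_lt_compat, pow_lt; lra).
    assert (Ht : 0 < t) by (apply Rinv_0_lt_compat, pow_lt; lra).
    replace (A / (y - p + e) ^ 2 + A / (q - y + e) ^ 2) with (A * s + A * t) in Hwu
      by (unfold s, t; field; lra).
    replace (6 * A / (y - p + e) ^ 4 + 6 * A / (q - y + e) ^ 4)
      with (6 * A * s ^ 2 + 6 * A * t ^ 2) by (unfold s, t; field; lra).
    pose proof (ko_barrier_supersolution kap A s t HkA HA ltac:(lra) ltac:(lra)).
    assert (Hw0 : 0 < A * s + A * t) by nra.
    assert (kap * (A * s + A * t) ^ 2 < kap * u y ^ 2).
    { apply Rmult_lt_compat_l; [lra|]. nra. }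
    specialize (Hg y ltac:(lra)).
    assert (kap * u y ^ 2 <= g y * u y ^ 2) by (apply Rmult_le_compat_r; nra).
    assert (0 <= mu * u y) by nra.
    lra.
  - replace (p - p + e) with e by ring. fold A in Hup. lra.
  - replace (q - q + e) with e by ring. fold A in Huq. lra.
Qed.

Lemma keller_osserman_bound (mu kap : R) (g u : R -> R) (p q : R) :
  0 <= mu -> 0 < kap -> p < q -> solves_on mu g u p q ->
  (forall x, p <= x <= q -> kap <= g x) ->
  forall x, p < x < q -> u x <= 6 / kap / (x - p) ^ 2 + 6 / kap / (q - x) ^ 2.
Proof.
  intros Hmu Hkap Hpq Hu Hg x Hx.
  set (A := 6 / kap).
  assert (HA : 0 < A) by (unfold A; apply Rdiv_lt_0_compat; lra).
  destruct (continuity_ab_maj u p q) as [m [Hmax Hm]];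
    [lra | exact (continuous_of_solves_on mu g u p q Hu) |].
  set (K := Rabs (u m) + 1).
  assert (HK : 0 < K) by (unfold K; pose proof (Rabs_pos (u m)); lra).
  assert (HuK : forall y, p <= y <= q -> u y <= K).
  { intros y Hy. specialize (Hmax y Hy). pose proof (Rle_abs (u m)). unfold K; lra. }
  (* The shift e keeps the barrier finite on [p, q] while making it exceed max u at p and q. *)
  set (e := Rmin 1 (A / K)).
  assert (He : 0 < e <= 1).
  { split; [apply Rmin_glb_lt; [lra | apply Rdiv_lt_0_compat; lra] | apply Rmin_l]. }
  assert (HeK : e * K <= A).
  { assert (Hle : e <= A / K) by apply Rmin_r.
    apply Rmult_le_compat_r with (r := K) in Hle; [|lra].
    replace (A / K * K) with A in Hle by (field; lra). exact Hle. }
  assert (HAe : K <= A / e ^ 2).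
  { apply Rmult_le_reg_r with (e ^ 2); [nra|].
    replace (A / e ^ 2 * e ^ 2) with A by (field; lra). nra. }
  pose proof (le_ko_barrier mu kap e g u p q Hmu Hkap Hpq ltac:(lra) Hu Hg
    ltac:(specialize (HuK p ltac:(lra)); fold A; lra)
    ltac:(specialize (HuK q ltac:(lra)); fold A; lra) x ltac:(lra)) as Hbarrier.
  fold A in Hbarrier.
  assert (A / (x - p + e) ^ 2 <= A / (x - p) ^ 2).
  { apply Rmult_le_compat_l; [lra|]. apply Rinv_le_contravar; [apply pow_lt; lra|].
    apply pow_incr; lra. }
  assert (A / (q - x + e) ^ 2 <= A / (q - x) ^ 2).
  { apply Rmult_le_compat_l; [lra|]. apply Rinv_le_contravar; [apply pow_lt; lra|].
    apply pow_incr; lra. }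
  lra.
Qed.

Lemma is_derive_exp_barrier (M r p q x : R) :
  is_derive (fun y => M * (exp (- r * (y - p)) + exp (- r * (q - y)))) x
    (M * (- r * exp (- r * (x - p)) + r * exp (- r * (q - x)))) /\
  is_derive (fun y => M * (- r * exp (- r * (y - p)) + r * exp (- r * (q - y)))) x
    (r ^ 2 * (M * (exp (- r * (x - p)) + exp (- r * (q - x))))).
Proof. split; auto_derive; auto; unfold Rminus; ring. Qed.

Lemma exponential_decay_bound (r M : R) (g u : R -> R) (p q : R) :
  0 < r -> p <= q -> 0 <= M -> solves_on (r ^ 2) g u p q ->
  (forall x, p <= x <= q -> 0 <= g x /\ u x <= M) ->
  forall x, p <= x <= q -> u x <= M * (exp (- r * (x - p)) + exp (- r * (q - x))).
Proof.
  intros Hr Hpq HM Hu HgM.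
  assert (Hend : 0 <= M * exp (- r * (q - p))) by (pose proof (exp_pos (- r * (q - p))); nra).
  apply (comparison_principle u (Derive u) (fun y => r ^ 2 * u y + g y * u y ^ 2)
    _ (fun y => M * (- r * exp (- r * (y - p)) + r * exp (- r * (q - y))))
      (fun y => r ^ 2 * (M * (exp (- r * (y - p)) + exp (- r * (q - y))))) p q Hpq).
  - intros y Hy. split; [apply Derive_correct, Hu, Hy | apply is_derive_exp_barrier].
  - intros y Hy. split; [apply Hu; lra | apply is_derive_exp_barrier].
  - intros y Hy Hvu.
    destruct (HgM y ltac:(lra)) as [Hg _].
    assert (0 <= g y * u y ^ 2) by (apply Rmult_le_pos; nra).
    assert (0 < r ^ 2) by (apply pow_lt; lra).
    nra.
  - replace (- r * (p - p)) with 0 by ring. rewrite exp_0.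
    destruct (HgM p ltac:(lra)) as [_ Hup]. lra.
  - replace (- r * (q - q)) with 0 by ring. rewrite exp_0.
    destruct (HgM q ltac:(lra)) as [_ Huq]. lra.
Qed.

Lemma exp_le_compat (x y : R) : x <= y -> exp x <= exp y.
Proof. intros [Hlt | ->]; [left; apply exp_increasing, Hlt | right; reflexivity]. Qed.

Lemma decay_on_compact (kap del r : R) (g u : R -> R) (c d : R) :
  0 < kap -> 0 < del -> 0 < r -> c <= d ->
  solves_on (r ^ 2) g u (c - 2 * del) (d + 2 * del) ->
  (forall x, c - 2 * del <= x <= d + 2 * del -> kap <= g x) ->
  forall x, c <= x <= d -> u x <= 24 / (kap * del ^ 2) * exp (- (r * del)).
Proof.
  intros Hkap Hdel Hr Hcd Hu Hg x Hx.
  set (M := 12 / (kap * del ^ 2)).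
  assert (Hdel2 : 0 < del ^ 2) by (apply pow_lt; lra).
  assert (HM : 0 < M) by (apply Rdiv_lt_0_compat; [lra | apply Rmult_lt_0_compat; lra]).
  assert (Hbound : forall y, c - del <= y <= d + del -> u y <= M).
  { intros y Hy.
    pose proof (keller_osserman_bound (r ^ 2) kap g u (c - 2 * del) (d + 2 * del)
      ltac:(nra) Hkap ltac:(lra) Hu Hg y ltac:(lra)) as Hko.
    assert (6 / kap / (y - (c - 2 * del)) ^ 2 <= 6 / kap / del ^ 2).
    { apply Rmult_le_compat_l; [apply Rlt_le, Rdiv_lt_0_compat; lra|].
      apply Rinv_le_contravar; [exact Hdel2 | apply pow_incr; lra]. }
    assert (6 / kap / (d + 2 * del - y) ^ 2 <= 6 / kap / del ^ 2).
    { apply Rmult_le_compat_l; [apply Rlt_le, Rdiv_lt_0_compat; lra|].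
      apply Rinv_le_contravar; [exact Hdel2 | apply pow_incr; lra]. }
    replace M with (6 / kap / del ^ 2 + 6 / kap / del ^ 2) by (unfold M; field; lra).
    lra. }
  pose proof (exponential_decay_bound r M g u (c - del) (d + del) Hr ltac:(lra) ltac:(lra)
    ltac:(intros y Hy; apply Hu; lra)
    ltac:(intros y Hy; split; [specialize (Hg y ltac:(lra)); lra | apply Hbound, Hy])
    x ltac:(lra)) as Hexp.
  assert (exp (- r * (x - (c - del))) <= exp (- (r * del))) by (apply exp_le_compat; nra).
  assert (exp (- r * (d + del - x)) <= exp (- (r * del))) by (apply exp_le_compat; nra).
  replace (24 / (kap * del ^ 2)) with (2 * M) by (unfold M; field; lra).
  nra.
Qed.

Lemma exp_decay_eventually_lt (K del eps : R) : 0 < del -> 0 < eps ->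
  exists R0, forall r, R0 < r -> K * exp (- (r * del)) < eps.
Proof.
  intros Hdel Heps.
  exists (Rabs K / (eps * del)). intros r Hr.
  assert (Hrd : Rabs K < eps * (r * del)).
  { apply Rmult_lt_compat_r with (r := eps * del) in Hr; [|nra].
    replace (Rabs K / (eps * del) * (eps * del)) with (Rabs K) in Hr by (field; lra).
    lra. }
  assert (Hrpos : 0 < r * del) by (pose proof (Rabs_pos K); nra).
  assert (Hexp : r * del < exp (r * del)) by (pose proof (exp_ineq1 (r * del)); lra).
  pose proof (exp_pos (r * del)). pose proof (Rle_abs K).
  rewrite exp_Ropp.
  apply Rmult_lt_reg_r with (exp (r * del)); [lra|].
  rewrite Rmult_assoc, Rinv_l by lra. nra.
Qed.

Lemma continuous_neg_bounded_away (a : R -> R) (p q : R) : p <= q ->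
  (forall x, p <= x <= q -> continuity_pt a x) -> (forall x, p <= x <= q -> a x < 0) ->
  exists kap, 0 < kap /\ forall x, p <= x <= q -> kap <= - a x.
Proof.
  intros Hpq Hcont Hneg.
  destruct (continuity_ab_maj a p q Hpq Hcont) as [m [Hmax Hm]].
  exists (- a m). split; [specialize (Hneg m Hm); lra|].
  intros x Hx. specialize (Hmax x Hx). lra.
Qed.

Lemma solves_on_of_pos_solution (a : R -> R) (lam al be p q : R) (u : R -> R) :
  pos_solution a lam al be u -> al < p -> q < be ->
  solves_on (- lam) (fun x => - a x) u p q.
Proof.
  intros [Hsol _] Hp Hq x Hx.
  destruct (Hsol x ltac:(lra)) as [_ [Hex Hd2]].
  split; [exact Hex|].
  replace (- lam * u x + - a x * u x ^ 2) with (- (lam * u x + a x * u x ^ 2)) by ring.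
  exact Hd2.
Qed.

Lemma pos_solutions_vanish_uniformly (a : R -> R) (al be : R) (l : R -> R -> R) :
  (forall x, al < x < be -> continuity_pt a x) ->
  (forall x, al < x < be -> a x < 0) ->
  (forall lam, pos_solution a lam al be (l lam)) ->
  forall c d, al < c -> d < be -> forall eps, 0 < eps ->
    exists L, forall lam, lam < L -> forall x, c <= x <= d -> Rabs (l lam x) < eps.
Proof.
  intros Hcont Hneg Hl c d Hc Hd eps Heps.
  destruct (Rlt_or_le d c) as [Hdc | Hcd]; [exists 0; intros; lra|].
  set (del := Rmin (c - al) (be - d) / 4).
  assert (Hdel : 0 < del /\ 4 * del <= c - al /\ 4 * del <= be - d).
  { pose proof (Rmin_l (c - al) (be - d)); pose proof (Rmin_r (c - al) (be - d)).
    assert (0 < Rmin (c - al) (be - d)) by (apply Rmin_glb_lt; lra).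
    unfold del; lra. }
  destruct (continuous_neg_bounded_away a (c - 2 * del) (d + 2 * del) ltac:(lra)
    ltac:(intros; apply Hcont; lra) ltac:(intros; apply Hneg; lra)) as [kap [Hkap Hg]].
  destruct (exp_decay_eventually_lt (24 / (kap * del ^ 2)) del eps ltac:(lra) Heps)
    as [R0 HR0].
  exists (- (Rabs R0 + 1) ^ 2). intros lam Hlam x Hx.
  pose proof (Rle_abs R0). pose proof (Rabs_pos R0).
  pose proof (pow2_ge_0 (Rabs R0 + 1)).
  set (r := sqrt (- lam)).
  assert (Hr2 : r ^ 2 = - lam) by (apply pow2_sqrt; lra).
  assert (Hr : Rabs R0 + 1 < r).
  { unfold r. rewrite <- (sqrt_pow2 (Rabs R0 + 1)) by lra.
    apply sqrt_lt_1_alt; lra. }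
  pose proof (solves_on_of_pos_solution a lam al be (c - 2 * del) (d + 2 * del) (l lam)
    (Hl lam) ltac:(lra) ltac:(lra)) as Hu.
  rewrite <- Hr2 in Hu.
  pose proof (decay_on_compact kap del r (fun y => - a y) (l lam) c d Hkap ltac:(lra)
    ltac:(lra) Hcd Hu Hg x Hx) as Hdecay.
  specialize (HR0 r ltac:(lra)).
  destruct (Hl lam) as [Hsol _].
  destruct (Hsol x ltac:(lra)) as [Hpos _].
  rewrite Rabs_right; lra.
Qed.

Lemma continuity_pt_of_continuous_on (a : R -> R) (s t : R) :
  (forall x, s <= x <= t -> forall eps, 0 < eps ->
     exists delta, 0 < delta /\ forall y, s <= y <= t -> Rabs (y - x) < delta ->
       Rabs (a y - a x) < eps) ->
  forall x, s < x < t -> continuity_pt a x.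
Proof.
  intros Hcont x Hx eps Heps.
  destruct (Hcont x ltac:(lra) eps Heps) as [del [Hdel Hball]].
  exists (Rmin del (Rmin (x - s) (t - x))). split.
  { apply Rmin_glb_lt; [lra | apply Rmin_glb_lt; lra]. }
  intros y [_ Hy]. simpl in *. unfold R_dist in *.
  pose proof (Rmin_l del (Rmin (x - s) (t - x))).
  pose proof (Rmin_r del (Rmin (x - s) (t - x))).
  pose proof (Rmin_l (x - s) (t - x)); pose proof (Rmin_r (x - s) (t - x)).
  apply Rabs_def2 in Hy as [Hy1 Hy2].
  apply Hball; [lra | apply Rabs_def1; lra].
Qed.

Lemma increasing_nodes_le (z : nat -> R) (n : nat) :
  (forall k, (k < n)%nat -> z k < z (S k)) ->
  forall i j, (i <= j <= n)%nat -> z i <= z j.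
Proof.
  intros Hinc i j Hij. induction j as [|j IH].
  - replace i with 0%nat by lia. lra.
  - destruct (Nat.eq_dec i (S j)) as [-> | Hne]; [lra|].
    assert (z i <= z j) by (apply IH; lia).
    assert (z j < z (S j)) by (apply Hinc; lia).
    lra.
Qed.

Theorem corollary3p1
  (a : R -> R) (n : nat) (z : nat -> R)
  (* a is continuous on [0,1] *)
  (Ha_cont : forall x, 0 <= x <= 1 -> forall eps, 0 < eps ->
     exists delta, 0 < delta /\ forall y, 0 <= y <= 1 -> Rabs (y - x) < delta ->
       Rabs (a y - a x) < eps)
  (* the nodal points 0 = z_0 < z_1 < ... < z_n = 1 with at least one
     negative and one positive interval (n >= 2) *)
  (Hn : (2 <= n)%nat)
  (Hz0 : z 0%nat = 0) (Hzn : z n = 1)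
  (Hzinc : forall k, (k < n)%nat -> z k < z (S k))
  (* a vanishes at all the endpoints *)
  (Hazero : forall k, (k <= n)%nat -> a (z k) = 0)
  (* on each interval (z_k, z_{k+1}) a has a strict sign *)
  (Hsign : forall k, (k < n)%nat ->
     (forall x, z k < x < z (S k) -> a x < 0) \/
     (forall x, z k < x < z (S k) -> 0 < a x))
  (* adjacent intervals have opposite signs (interlacing) *)
  (Halt : forall k, (S k < n)%nat ->
     ((forall x, z k < x < z (S k) -> a x < 0) <->
      (forall x, z (S k) < x < z (S (S k)) -> 0 < a x)))
  (* a negative interval (alpha_j, beta_j) = (z_k, z_{k+1}) *)
  (k : nat) (Hk : (k < n)%nat)
  (Hneg : forall x, z k < x < z (S k) -> a x < 0)
  (* l lam = the minimal positive solution for parameter lam *)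
  (l : R -> R -> R)
  (Hl : forall lam, minimal_pos_solution a lam (z k) (z (S k)) (l lam)) :
  (forall x, z k < x < z (S k) -> is_lim (fun lam => l lam x) m_infty 0) /\
  (forall c d, z k < c -> d < z (S k) ->
     forall eps, 0 < eps ->
       exists L, forall lam, lam < L ->
         forall x, c <= x <= d -> Rabs (l lam x) < eps).
Proof.
  assert (Hz : 0 <= z k /\ z (S k) <= 1).
  { rewrite <- Hz0, <- Hzn.
    split; apply (increasing_nodes_le z n Hzinc); lia. }
  assert (Hcont : forall x, z k < x < z (S k) -> continuity_pt a x).
  { intros x Hx. apply (continuity_pt_of_continuous_on a 0 1 Ha_cont). lra. }
  assert (Huniform := pos_solutions_vanish_uniformly a (z k) (z (S k)) l Hcont Hneg
    (fun lam => proj1 (Hl lam))).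
  split; [|exact Huniform].
  intros x Hx. apply is_lim_spec. intros eps.
  destruct (Huniform x x ltac:(lra) ltac:(lra) eps (cond_pos eps)) as [L HL].
  exists L. intros lam Hlam. rewrite Rminus_0_r. apply HL; lra.
Qed.
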